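(* Let $(a_n)_{n\ge0}$ be nonzero complex numbers with $|a_0|\ge|a_1|\ge\cdots$ and $\sum_n|a_n|^2<\infty$, let $T$ be the weighted shift $Te_n=a_ne_{n+1}$, and let $(c_k)_{k\ge1}$ be complex numbers. Then the sequence $p_n(T)=\sum_{k=1}^nc_kT^k$ converges in operator norm (to an element of $\mathcal A_T$) if and only if $\sum_{k=1}^\infty|c_k|^2|a_0a_1\cdots a_{k-1}|^2<\infty$.
   Context: $H$ is a complex Hilbert space with orthonormal basis $\{e_n\}_{n\ge0}$, $Te_n=a_ne_{n+1}$, and $\mathcal A_T$ is the operator-norm closure in $\mathcal B(H)$ of the polynomials $p(T)$ with $p(0)=0$. *)

From Stdlib Require Import Reals.
From Coquelicot Require Import Coquelicot.
Open Scope R_scope.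

(* The Hilbert space H with orthonormal basis (e_n) is modelled, up to the
   unitary identifying e_n with the n-th unit vector, by l^2(N; C):
   vectors are coefficient sequences x : nat -> C with sum |x_n|^2 < oo. *)
Definition vec := nat -> C.

Definition in_l2 (x : vec) : Prop := ex_series (fun n => (Cmod (x n)) ^ 2).

Definition l2norm (x : vec) : R := sqrt (Series (fun n => (Cmod (x n)) ^ 2)).

Definition vzero : vec := fun _ => RtoC 0.
Definition vadd (x y : vec) : vec := fun n => Cplus (x n) (y n).
Definition vsub (x y : vec) : vec := fun n => Cminus (x n) (y n).
Definition vscale (c : C) (x : vec) : vec := fun n => Cmult c (x n).

(* Weighted shift T e_n = a_n e_{n+1}, i.e. (T x)_0 = 0, (T x)_{n+1} = a_n x_n. *)
Definition wshift (a : nat -> C) (x : vec) : vec :=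
  fun n => match n with O => RtoC 0 | S m => Cmult (a m) (x m) end.

Fixpoint wshift_pow (a : nat -> C) (k : nat) (x : vec) : vec :=
  match k with O => x | S k' => wshift a (wshift_pow a k' x) end.

(* p_n(T) x = sum_{k=1}^n c_k T^k x   (c 0 is never used) *)
Fixpoint poly_op (a c : nat -> C) (n : nat) (x : vec) : vec :=
  match n with
  | O => vzero
  | S m => vadd (poly_op a c m x) (vscale (c (S m)) (wshift_pow a (S m) x))
  end.

Fixpoint wprod (a : nat -> C) (k : nat) : C :=
  match k with O => RtoC 1 | S k' => Cmult (wprod a k') (a k') end.

Definition op_norm_converges (P : nat -> vec -> vec) : Prop :=
  exists S : vec -> vec,
    forall eps : R, 0 < eps ->
      exists N : nat, forall n : nat, (N <= n)%nat ->
        forall x : vec, in_l2 x ->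
          in_l2 (vsub (P n x) (S x)) /\
          l2norm (vsub (P n x) (S x)) <= eps * l2norm x.

From Stdlib Require Import Reals Lra Lia.
From Coquelicot Require Import Coquelicot.
Open Scope R_scope.

(* Sufficiency.  The limit S is given coordinatewise: (S x)_j = (p_j(T) x)_j.
   Since |a_n| decreases, |a_i ... a_{i+k-1}| <= |a_i|/|a_0| |a_0 ... a_{k-1}|,
   so |(p_n(T) x - S x)_j| is bounded by a convolution f * g_n with
   f_i = |x_i| |a_i| / |a_0| (summable, sum f <= ||x|| ||a|| / |a_0| by
   Cauchy-Schwarz) and g_n the tail (k >= n) of sqrt h.  Young's inequality
   ||f * g||_2 <= ||f||_1 ||g||_2 then gives
   ||p_n(T) x - S x|| <= ||a|| / |a_0| (sum_{k>=n} h_k)^(1/2) ||x||.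

   Necessity.  p_n(T) e_0 = sum_{k=1}^n c_k a_0 ... a_{k-1} e_k has squared norm
   sum_{k=1}^n h_k; norm convergence keeps p_n(T) e_0 within bounded distance of
   S e_0, so these partial sums stay bounded. *)

Fixpoint fsum (f : nat -> R) (n : nat) : R :=
  match n with O => 0 | S m => fsum f m + f m end.

Lemma fsum_sum_n (f : nat -> R) (n : nat) : sum_n f n = fsum f (S n).
Proof.
  induction n as [|n IH]; simpl.
  - rewrite sum_O. lra.
  - rewrite sum_Sn, IH. reflexivity.
Qed.

Lemma fsum_ext (f g : nat -> R) (n : nat) :
  (forall k, (k < n)%nat -> f k = g k) -> fsum f n = fsum g n.
Proof.
  induction n as [|n IH]; intros H; simpl; [reflexivity|].
  rewrite IH by (intros; apply H; lia). rewrite H by lia. reflexivity.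
Qed.

Lemma fsum_le (f g : nat -> R) (n : nat) :
  (forall k, (k < n)%nat -> f k <= g k) -> fsum f n <= fsum g n.
Proof.
  induction n as [|n IH]; intros H; simpl; [lra|].
  assert (fsum f n <= fsum g n) by (apply IH; intros; apply H; lia).
  specialize (H n ltac:(lia)). lra.
Qed.

Lemma fsum_nonneg (f : nat -> R) (n : nat) :
  (forall k, (k < n)%nat -> 0 <= f k) -> 0 <= fsum f n.
Proof.
  induction n as [|n IH]; intros H; simpl; [lra|].
  assert (0 <= fsum f n) by (apply IH; intros; apply H; lia).
  specialize (H n ltac:(lia)). lra.
Qed.

Lemma fsum_mono (f : nat -> R) (n m : nat) :
  (forall k, 0 <= f k) -> (n <= m)%nat -> fsum f n <= fsum f m.
Proof. intros H Hnm. induction Hnm; simpl; [lra|]. specialize (H m). lra. Qed.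

Lemma fsum_plus (f g : nat -> R) (n : nat) :
  fsum (fun k => f k + g k) n = fsum f n + fsum g n.
Proof. induction n; simpl; lra. Qed.

Lemma fsum_scal (c : R) (f : nat -> R) (n : nat) :
  fsum (fun k => c * f k) n = c * fsum f n.
Proof. induction n as [|n IH]; simpl; [ring|]. rewrite IH. ring. Qed.

Lemma fsum_shift (f : nat -> R) (n : nat) :
  fsum f (S n) = f O + fsum (fun k => f (S k)) n.
Proof. induction n as [|n IH]; simpl in *; [ring|]. rewrite IH. ring. Qed.

Lemma fsum_rev (f : nat -> R) (j : nat) : fsum (fun k => f (j - S k)%nat) j = fsum f j.
Proof.
  revert f; induction j as [|j IH]; intros f; [reflexivity|].
  rewrite (fsum_shift f j), <- (IH (fun k => f (S k))). simpl fsum.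
  rewrite Nat.sub_diag, (fsum_ext _ (fun k => f (S (j - S k)))) by (intros; f_equal; lia).
  ring.
Qed.

Lemma fsum_exchange (G : nat -> nat -> R) (J : nat) :
  fsum (fun j => fsum (fun k => G (j - S k)%nat k) j) J
  = fsum (fun k => fsum (fun i => G i k) (J - S k)) J.
Proof.
  induction J as [|J IH]; simpl; [reflexivity|]. rewrite IH, Nat.sub_diag.
  rewrite (fsum_ext (fun k => fsum (fun i => G i k) (S J - S k))
                    (fun k => fsum (fun i => G i k) (J - S k) + G (J - S k)%nat k)).
  - simpl. rewrite fsum_plus. ring.
  - intros k Hk. replace (S J - S k)%nat with (S (J - S k)) by lia. reflexivity.
Qed.

Lemma fsum_trunc (f : nat -> R) (n m : nat) :
  fsum (fun k => if (k <? n)%nat then f k else 0) m = fsum f (Nat.min n m).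
Proof.
  induction m as [|m IH]; simpl; [rewrite Nat.min_0_r; reflexivity|]. rewrite IH.
  destruct (Nat.ltb_spec m n).
  - replace (Nat.min n (S m)) with (S m) by lia. replace (Nat.min n m) with m by lia. reflexivity.
  - replace (Nat.min n (S m)) with n by lia. replace (Nat.min n m) with n by lia. ring.
Qed.

Lemma fsum_tail (f : nat -> R) (n m : nat) :
  fsum (fun k => if (n <=? k)%nat then f k else 0) m = fsum f m - fsum f (Nat.min n m).
Proof.
  rewrite <- fsum_trunc.
  assert (E : fsum f m = fsum (fun k => (if (k <? n)%nat then f k else 0)
                                       + (if (n <=? k)%nat then f k else 0)) m).
  { apply fsum_ext. intros k _.
    destruct (Nat.ltb_spec k n), (Nat.leb_spec n k); try lia; ring. }
  rewrite E, fsum_plus. ring.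
Qed.

Lemma nonneg_quadratic_discriminant (A B C : R) :
  0 <= C -> (forall t, 0 <= A - 2 * t * B + t ^ 2 * C) -> B ^ 2 <= A * C.
Proof.
  intros HC H. destruct (Rle_lt_or_eq_dec _ _ HC) as [Hpos|Hzero].
  - specialize (H (B / C)).
    replace (A - 2 * (B / C) * B + (B / C) ^ 2 * C) with ((A * C - B ^ 2) / C) in H
      by (field; lra).
    destruct (Rle_or_lt (B ^ 2) (A * C)) as [Hle|Hlt]; [exact Hle|].
    assert ((A * C - B ^ 2) / C < 0) by (apply Rdiv_neg_pos; lra). lra.
  - subst C. destruct (Req_dec B 0) as [HB|HB]; [subst; lra|].
    specialize (H ((A + 1) / (2 * B))).
    replace (A - 2 * ((A + 1) / (2 * B)) * B + ((A + 1) / (2 * B)) ^ 2 * 0) with (-1) in H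
      by (field; exact HB).
    lra.
Qed.

Lemma cauchy_schwarz (u v : nat -> R) (n : nat) :
  (fsum (fun k => u k * v k) n) ^ 2 <= fsum (fun k => u k ^ 2) n * fsum (fun k => v k ^ 2) n.
Proof.
  apply nonneg_quadratic_discriminant.
  - apply fsum_nonneg. intros; apply pow2_ge_0.
  - intros t.
    replace (fsum (fun k => u k ^ 2) n - 2 * t * fsum (fun k => u k * v k) n
             + t ^ 2 * fsum (fun k => v k ^ 2) n)
      with (fsum (fun k => (u k - t * v k) ^ 2) n).
    + apply fsum_nonneg. intros; apply pow2_ge_0.
    + induction n as [|n IH]; cbn [fsum]; [ring|]. rewrite IH. ring.
Qed.

Lemma cauchy_schwarz_weighted (f g : nat -> R) (n : nat) :
  (forall k, 0 <= f k) ->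
  (fsum (fun k => f k * g k) n) ^ 2 <= fsum f n * fsum (fun k => f k * g k ^ 2) n.
Proof.
  intros Hf.
  pose proof (cauchy_schwarz (fun k => sqrt (f k)) (fun k => sqrt (f k) * g k) n) as H.
  rewrite (fsum_ext _ (fun k => f k * g k)) in H
    by (intros; rewrite <- Rmult_assoc, sqrt_sqrt; auto).
  rewrite (fsum_ext (fun k => sqrt (f k) ^ 2) f) in H by (intros; apply pow2_sqrt; auto).
  rewrite (fsum_ext (fun k => (sqrt (f k) * g k) ^ 2) (fun k => f k * g k ^ 2)) in H
    by (intros; rewrite Rpow_mult_distr, pow2_sqrt; auto).
  exact H.
Qed.

(* Discrete convolution (f * g)(j) = sum_{i + k = j - 1} f i g k. *)
Definition conv (f g : nat -> R) (j : nat) : R := fsum (fun k => f (j - S k)%nat * g k) j.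

Lemma young_conv (f g : nat -> R) (F : R) (J : nat) :
  (forall i, 0 <= f i) -> (forall m, fsum f m <= F) ->
  fsum (fun j => conv f g j ^ 2) J <= F ^ 2 * fsum (fun k => g k ^ 2) J.
Proof.
  intros Hf HF.
  assert (HF0 : 0 <= F) by exact (HF O).
  apply Rle_trans with (fsum (fun j => F * fsum (fun k => f (j - S k)%nat * g k ^ 2) j) J).
  - apply fsum_le. intros j _. unfold conv.
    eapply Rle_trans; [apply (cauchy_schwarz_weighted (fun k => f (j - S k)%nat)); auto|].
    apply Rmult_le_compat_r.
    + apply fsum_nonneg. intros; apply Rmult_le_pos; [apply Hf|apply pow2_ge_0].
    + rewrite (fsum_rev f j). apply HF.
  - rewrite fsum_scal, (fsum_exchange (fun i k => f i * g k ^ 2) J).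
    replace (F ^ 2) with (F * F) by ring. rewrite Rmult_assoc.
    apply Rmult_le_compat_l; [exact HF0|].
    rewrite <- fsum_scal. apply fsum_le. intros k _.
    rewrite (fsum_ext _ (fun i => g k ^ 2 * f i)) by (intros; ring).
    rewrite fsum_scal, Rmult_comm. apply Rmult_le_compat_r; [apply pow2_ge_0|apply HF].
Qed.

Lemma series_of_bounded_partial (f : nat -> R) (M : R) :
  (forall n, 0 <= f n) -> (forall n, fsum f n <= M) -> ex_series f /\ Series f <= M.
Proof.
  intros Hf HM.
  assert (Hgrow : Un_growing (fun n => sum_n f n)).
  { intros n. rewrite !fsum_sum_n. simpl. specialize (Hf (S n)). lra. }
  assert (Hub : has_ub (fun n => sum_n f n)).
  { exists M. intros x [n ->]. rewrite fsum_sum_n. apply HM. }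
  destruct (growing_cv _ Hgrow Hub) as [l Hl].
  apply is_lim_seq_Reals in Hl.
  assert (Hs : is_series f l) by exact Hl.
  split; [exists l; exact Hs|].
  rewrite (is_series_unique f l Hs).
  assert (Hle : Rbar_le l M).
  { apply (is_lim_seq_le (sum_n f) (fun _ => M) l M); [| exact Hl | apply is_lim_seq_const].
    intros n; rewrite fsum_sum_n; apply HM. }
  exact Hle.
Qed.

Lemma partial_le_series (f : nat -> R) (n : nat) :
  (forall k, 0 <= f k) -> ex_series f -> fsum f n <= Series f.
Proof.
  intros Hf Hex.
  assert (Hle : Rbar_le (fsum f n) (Series f)).
  { apply (is_lim_seq_le_loc (fun _ => fsum f n) (sum_n f));
      [| apply is_lim_seq_const | exact (Series_correct _ Hex)].
    exists n. intros m Hm. rewrite fsum_sum_n. apply fsum_mono; auto. }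
  exact Hle.
Qed.

Lemma series_tail_small (f : nat -> R) :
  ex_series f -> forall delta, 0 < delta -> exists N, forall n m, (N <= n)%nat ->
    fsum (fun k => if (n <=? k)%nat then f k else 0) m < delta.
Proof.
  intros [l Hl] delta Hdelta.
  assert (Hc : Cauchy_crit (sum_n f)).
  { apply CV_Cauchy. exists l. apply is_lim_seq_Reals. exact Hl. }
  destruct (Hc delta Hdelta) as [N HN].
  exists (S N). intros n m Hn. rewrite fsum_tail.
  destruct (Nat.le_gt_cases m n) as [Hmn|Hmn].
  - replace (Nat.min n m) with m by lia. lra.
  - replace (Nat.min n m) with n by lia.
    destruct n as [|n]; [lia|]. destruct m as [|m]; [lia|].
    specialize (HN m n ltac:(lia) ltac:(lia)). unfold Rdist in HN.
    rewrite !fsum_sum_n in HN. apply Rabs_def2 in HN. lra.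
Qed.

Lemma l2_partial_le (x : vec) (J : nat) :
  in_l2 x -> fsum (fun n => Cmod (x n) ^ 2) J <= l2norm x ^ 2.
Proof.
  intros Hx. unfold l2norm.
  assert (Hpos : forall n, 0 <= Cmod (x n) ^ 2) by (intros; apply pow2_ge_0).
  rewrite pow2_sqrt by exact (partial_le_series _ O Hpos Hx).
  apply partial_le_series; assumption.
Qed.

Lemma l2_of_bounded_partial (y : vec) (M : R) :
  0 <= M -> (forall J, fsum (fun n => Cmod (y n) ^ 2) J <= M ^ 2) ->
  in_l2 y /\ l2norm y <= M.
Proof.
  intros HM HJ.
  destruct (series_of_bounded_partial _ _ (fun n => pow2_ge_0 _) HJ) as [Hex Hle].
  split; [exact Hex|]. unfold l2norm.
  rewrite <- (sqrt_pow2 M HM). apply sqrt_le_1_alt. exact Hle.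
Qed.

Lemma l2_pairing_le (x y : vec) (m : nat) :
  in_l2 x -> in_l2 y ->
  fsum (fun i => Cmod (x i) * Cmod (y i)) m <= l2norm x * l2norm y.
Proof.
  intros Hx Hy.
  assert (Hnorm : 0 <= l2norm x * l2norm y) by (apply Rmult_le_pos; apply sqrt_pos).
  assert (Hsq : (fsum (fun i => Cmod (x i) * Cmod (y i)) m) ^ 2 <= (l2norm x * l2norm y) ^ 2).
  { eapply Rle_trans; [apply cauchy_schwarz|]. rewrite Rpow_mult_distr.
    apply Rmult_le_compat; try (apply fsum_nonneg; intros; apply pow2_ge_0);
      apply l2_partial_le; assumption. }
  nra.
Qed.

Lemma wshift_pow_coord (a : nat -> C) (k : nat) (x : vec) (j : nat) :
  wshift_pow a k x j =
  if (k <=? j)%nat then Cmult (wprod (fun m => a (j - k + m)%nat) k) (x (j - k)%nat) else RtoC 0.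
Proof.
  revert j; induction k as [|k IH]; intros j.
  - simpl. rewrite Nat.sub_0_r. ring.
  - destruct j as [|j]; [reflexivity|].
    simpl wshift_pow. unfold wshift. rewrite IH. simpl Nat.leb.
    destruct (Nat.leb_spec k j); [|ring].
    simpl wprod. replace (j - k + k)%nat with j by lia.
    replace (S j - S k)%nat with (j - k)%nat by lia. ring.
Qed.

Lemma Cmod_antitone (a : nat -> C) (ha_dec : forall n, Cmod (a (S n)) <= Cmod (a n))
  (n m : nat) : (n <= m)%nat -> Cmod (a m) <= Cmod (a n).
Proof. intros H; induction H; [lra|]. specialize (ha_dec m). lra. Qed.

Lemma block_prod_le (a : nat -> C) (ha_dec : forall n, Cmod (a (S n)) <= Cmod (a n))
  (ha0 : a O <> RtoC 0) (i k : nat) :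
  Cmod (wprod (fun m => a (i + m)%nat) (S k)) <= / Cmod (a O) * Cmod (a i) * Cmod (wprod a (S k)).
Proof.
  assert (Ha0 : 0 < Cmod (a O)) by (apply Cmod_gt_0; exact ha0).
  induction k as [|k IH].
  - simpl. rewrite !Cmod_mult, Cmod_1, Nat.add_0_r. right. field. lra.
  - change (Cmod (Cmult (wprod (fun m => a (i + m)%nat) (S k)) (a (i + S k)%nat))
            <= / Cmod (a O) * Cmod (a i) * Cmod (Cmult (wprod a (S k)) (a (S k)))).
    rewrite !Cmod_mult.
    assert (Ha : Cmod (a (i + S k)%nat) <= Cmod (a (S k))) by (apply Cmod_antitone; auto; lia).
    assert (0 <= / Cmod (a O) * Cmod (a i))
      by (apply Rmult_le_pos; [left; apply Rinv_0_lt_compat; exact Ha0|apply Cmod_ge_0]).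
    pose proof (Cmod_ge_0 (a (i + S k)%nat)). pose proof (Cmod_ge_0 (wprod a (S k))).
    pose proof (Cmod_ge_0 (wprod (fun m => a (i + m)%nat) (S k))).
    apply Rle_trans with (/ Cmod (a O) * Cmod (a i) * Cmod (wprod a (S k)) * Cmod (a (i + S k)%nat)).
    + apply Rmult_le_compat_r; auto.
    + rewrite Rmult_assoc. apply Rmult_le_compat_l; auto. apply Rmult_le_compat_l; auto.
Qed.

Lemma Cmod_partial_sums_diff (s u : nat -> C) (n m : nat) :
  (forall k, s (S k) = Cplus (s k) (u k)) -> (n <= m)%nat ->
  Cmod (Cminus (s m) (s n)) <= fsum (fun k => if (n <=? k)%nat then Cmod (u k) else 0) m.
Proof.
  intros Hs Hnm. induction Hnm as [|m Hnm IH].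
  - replace (Cminus (s n) (s n)) with (RtoC 0) by ring. rewrite Cmod_0.
    apply fsum_nonneg. intros k _. destruct (n <=? k)%nat; [apply Cmod_ge_0|lra].
  - simpl fsum. rewrite Hs. destruct (Nat.leb_spec n m); [|lia].
    replace (Cminus (Cplus (s m) (u m)) (s n)) with (Cplus (Cminus (s m) (s n)) (u m)) by ring.
    eapply Rle_trans; [apply Cmod_triangle|]. lra.
Qed.

(* The candidate limit S of p_n(T): its j-th coordinate is that of p_j(T) x,
   since T^k x vanishes at coordinate j as soon as k > j. *)
Definition poly_limit (a c : nat -> C) (x : vec) : vec := fun j => poly_op a c j x j.

Lemma poly_op_stable (a c : nat -> C) (x : vec) (n j : nat) :
  (j <= n)%nat -> poly_op a c n x j = poly_limit a c x j.
Proof.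
  intros Hjn. unfold poly_limit. induction Hjn as [|n Hjn IH]; [reflexivity|].
  change (poly_op a c (S n) x j)
    with (Cplus (poly_op a c n x j) (Cmult (c (S n)) (wshift_pow a (S n) x j))).
  rewrite wshift_pow_coord, IH. destruct (Nat.leb_spec (S n) j); [lia|]. ring.
Qed.

(* The convolution factors f and g_n of the coordinatewise estimate of
   p_n(T) x - S x; tail_coeff a c n k = sqrt h_{k+1} for k >= n, else 0. *)
Definition shift_weight (a : nat -> C) (x : vec) (i : nat) : R :=
  / Cmod (a O) * (Cmod (x i) * Cmod (a i)).

Definition tail_coeff (a c : nat -> C) (n k : nat) : R :=
  if (n <=? k)%nat then Cmod (c (S k)) * Cmod (wprod a (S k)) else 0.

Lemma shift_weight_nonneg (a : nat -> C) (x : vec) (i : nat) : 0 <= shift_weight a x i.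
Proof.
  unfold shift_weight. apply Rmult_le_pos.
  - destruct (Req_dec (Cmod (a O)) 0) as [E|E].
    + rewrite E, Rinv_0. lra.
    + left. apply Rinv_0_lt_compat. pose proof (Cmod_ge_0 (a O)). lra.
  - apply Rmult_le_pos; apply Cmod_ge_0.
Qed.

Lemma tail_coeff_nonneg (a c : nat -> C) (n k : nat) : 0 <= tail_coeff a c n k.
Proof. unfold tail_coeff. destruct (n <=? k)%nat; [apply Rmult_le_pos; apply Cmod_ge_0|lra]. Qed.

Lemma poly_op_error_coord (a c : nat -> C) (x : vec) (n j : nat)
  (ha_dec : forall n, Cmod (a (S n)) <= Cmod (a n)) (ha0 : a O <> RtoC 0) :
  Cmod (vsub (poly_op a c n x) (poly_limit a c x) j)
  <= conv (shift_weight a x) (tail_coeff a c n) j.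
Proof.
  assert (Hconv : 0 <= conv (shift_weight a x) (tail_coeff a c n) j).
  { apply fsum_nonneg. intros; apply Rmult_le_pos;
      [apply shift_weight_nonneg|apply tail_coeff_nonneg]. }
  unfold vsub. destruct (Nat.le_gt_cases j n) as [Hjn|Hnj].
  - rewrite poly_op_stable by exact Hjn.
    replace (Cminus _ _) with (RtoC 0) by ring. rewrite Cmod_0. exact Hconv.
  - replace (Cminus (poly_op a c n x j) (poly_limit a c x j))
      with (Copp (Cminus (poly_op a c j x j) (poly_op a c n x j))) by (unfold poly_limit; ring).
    rewrite Cmod_opp.
    eapply Rle_trans.
    { apply (Cmod_partial_sums_diff (fun m => poly_op a c m x j)
               (fun k => Cmult (c (S k)) (wshift_pow a (S k) x j))); [reflexivity|lia]. }
    apply fsum_le. intros k Hk. unfold tail_coeff. destruct (Nat.leb_spec n k).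
    + rewrite wshift_pow_coord. destruct (Nat.leb_spec (S k) j); [|lia].
      rewrite !Cmod_mult.
      pose proof (block_prod_le a ha_dec ha0 (j - S k) k) as Hblock.
      unfold shift_weight.
      pose proof (Cmod_ge_0 (c (S k))). pose proof (Cmod_ge_0 (x (j - S k)%nat)).
      apply Rle_trans with (Cmod (c (S k)) * ((/ Cmod (a O) * Cmod (a (j - S k)%nat)
                             * Cmod (wprod a (S k))) * Cmod (x (j - S k)%nat))).
      * apply Rmult_le_compat_l; auto. apply Rmult_le_compat_r; auto.
      * right; ring.
    + rewrite Rmult_0_r. lra.
Qed.

(* The series of the theorem, indexed from 0: coeff_series a c k = h_{k+1}. *)
Definition coeff_series (a c : nat -> C) (k : nat) : R :=
  (Cmod (c (S k))) ^ 2 * (Cmod (wprod a (S k))) ^ 2.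

Lemma poly_op_converges_of_summable (a c : nat -> C) (ha0 : a O <> RtoC 0)
  (ha_dec : forall n, Cmod (a (S n)) <= Cmod (a n)) (ha_l2 : in_l2 a) :
  ex_series (coeff_series a c) -> op_norm_converges (fun n => poly_op a c n).
Proof.
  intros Hh. exists (poly_limit a c). intros eps Heps.
  assert (Hinv : 0 <= / Cmod (a O)) by (left; apply Rinv_0_lt_compat, Cmod_gt_0, ha0).
  set (kappa := / Cmod (a O) * l2norm a).
  set (delta := eps ^ 2 / (kappa ^ 2 + 1)).
  assert (Hdelta : 0 < delta).
  { apply Rdiv_lt_0_compat; [apply pow_lt; lra|]. pose proof (pow2_ge_0 kappa). lra. }
  assert (Hkd : kappa ^ 2 * delta <= eps ^ 2).
  { unfold delta in *. replace (kappa ^ 2 * (eps ^ 2 / (kappa ^ 2 + 1)))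
      with (eps ^ 2 - eps ^ 2 / (kappa ^ 2 + 1))
      by (field; pose proof (pow2_ge_0 kappa); lra). lra. }
  destruct (series_tail_small _ Hh delta Hdelta) as [N HN].
  exists N. intros n Hn x Hx.
  assert (Hx0 : 0 <= l2norm x) by apply sqrt_pos.
  apply l2_of_bounded_partial; [apply Rmult_le_pos; lra|]. intros J.
  assert (Hweight : forall m, fsum (shift_weight a x) m <= kappa * l2norm x).
  { intros m. unfold shift_weight, kappa. rewrite fsum_scal, Rmult_assoc, (Rmult_comm (l2norm a)).
    apply Rmult_le_compat_l; [exact Hinv|]. apply l2_pairing_le; assumption. }
  assert (Htail : fsum (fun k => tail_coeff a c n k ^ 2) J <= delta).
  { rewrite (fsum_ext _ (fun k => if (n <=? k)%nat then coeff_series a c k else 0)).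
    - left. apply HN, Hn.
    - intros k _. unfold tail_coeff, coeff_series. destruct (n <=? k)%nat; ring. }
  apply Rle_trans with (fsum (fun j => conv (shift_weight a x) (tail_coeff a c n) j ^ 2) J).
  { apply fsum_le. intros j _. apply pow_incr. split; [apply Cmod_ge_0|].
    apply poly_op_error_coord; assumption. }
  eapply Rle_trans; [apply young_conv; [apply shift_weight_nonneg|exact Hweight]|].
  apply Rle_trans with ((kappa * l2norm x) ^ 2 * delta).
  - apply Rmult_le_compat_l; [apply pow2_ge_0|exact Htail].
  - replace ((kappa * l2norm x) ^ 2 * delta) with (l2norm x ^ 2 * (kappa ^ 2 * delta)) by ring.
    replace ((eps * l2norm x) ^ 2) with (l2norm x ^ 2 * eps ^ 2) by ring.
    apply Rmult_le_compat_l; [apply pow2_ge_0|exact Hkd].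
Qed.

Definition unit0 : vec := fun j => match j with O => RtoC 1 | S _ => RtoC 0 end.

Lemma unit0_l2 : in_l2 unit0 /\ l2norm unit0 = 1.
Proof.
  assert (Hlim : is_lim_seq (sum_n (fun n => Cmod (unit0 n) ^ 2)) 1).
  { apply (is_lim_seq_ext (fun _ => 1)); [|apply is_lim_seq_const].
    intros n. rewrite fsum_sum_n, fsum_shift. simpl unit0. rewrite Cmod_1.
    induction n as [|n IH]; simpl fsum in *; [ring|].
    rewrite Cmod_0 in *. lra. }
  assert (Hs : is_series (fun n => Cmod (unit0 n) ^ 2) 1) by exact Hlim.
  split; [exists 1; exact Hs|].
  unfold l2norm. rewrite (is_series_unique _ _ Hs). apply sqrt_1.
Qed.

Lemma wshift_pow_unit0 (a : nat -> C) (k j : nat) :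
  wshift_pow a k unit0 j = if (j =? k)%nat then wprod a k else RtoC 0.
Proof.
  revert j; induction k as [|k IH]; intros j.
  - destruct j; reflexivity.
  - destruct j as [|j]; [reflexivity|].
    simpl wshift_pow. unfold wshift. rewrite IH. simpl Nat.eqb.
    destruct (Nat.eqb_spec j k); [subst; simpl wprod; ring|ring].
Qed.

Lemma poly_op_at_zero (a c : nat -> C) (n : nat) (x : vec) : poly_op a c n x O = RtoC 0.
Proof.
  induction n as [|n IH]; [reflexivity|].
  change (Cplus (poly_op a c n x O) (Cmult (c (S n)) (RtoC 0)) = RtoC 0).
  rewrite IH. ring.
Qed.

Lemma poly_op_unit0 (a c : nat -> C) (n k : nat) :
  poly_op a c n unit0 (S k) = if (k <? n)%nat then Cmult (c (S k)) (wprod a (S k)) else RtoC 0.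
Proof.
  induction n as [|n IH]; [reflexivity|].
  change (Cplus (poly_op a c n unit0 (S k)) (Cmult (c (S n)) (wshift_pow a (S n) unit0 (S k)))
          = if (k <? S n)%nat then Cmult (c (S k)) (wprod a (S k)) else RtoC 0).
  rewrite IH, wshift_pow_unit0. simpl Nat.eqb.
  destruct (Nat.ltb_spec k n), (Nat.eqb_spec k n), (Nat.ltb_spec k (S n));
    try lia; try subst; ring.
Qed.

Lemma poly_op_unit0_energy (a c : nat -> C) (n m : nat) :
  fsum (fun j => Cmod (poly_op a c n unit0 j) ^ 2) (S m) = fsum (coeff_series a c) (Nat.min n m).
Proof.
  rewrite fsum_shift, poly_op_at_zero, Cmod_0, <- fsum_trunc.
  rewrite (fsum_ext _ (fun k => if (k <? n)%nat then coeff_series a c k else 0)).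
  - ring.
  - intros k _. rewrite poly_op_unit0. unfold coeff_series.
    destruct (k <? n)%nat; [rewrite Cmod_mult; ring|rewrite Cmod_0; ring].
Qed.

Lemma Cmod_sq_split3 (u v w : C) :
  Cmod u ^ 2 <= 3 * (Cmod (Cminus u v) ^ 2 + Cmod (Cminus w v) ^ 2 + Cmod w ^ 2).
Proof.
  assert (Htri : Cmod u <= Cmod (Cminus u v) + Cmod (Cminus w v) + Cmod w).
  { replace u with (Cplus (Cplus (Cminus u v) (Copp (Cminus w v))) w) at 1 by ring.
    eapply Rle_trans; [apply Cmod_triangle|]. rewrite <- (Cmod_opp (Cminus w v)).
    pose proof (Cmod_triangle (Cminus u v) (Copp (Cminus w v))). lra. }
  set (p := Cmod (Cminus u v)) in *. set (q := Cmod (Cminus w v)) in *. set (r := Cmod w) in *.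
  assert (Hsq : Cmod u ^ 2 <= (p + q + r) ^ 2) by (apply pow_incr; split; [apply Cmod_ge_0|exact Htri]).
  assert (0 <= (p - q) ^ 2 + (q - r) ^ 2 + (p - r) ^ 2)
    by (repeat apply Rplus_le_le_0_compat; apply pow2_ge_0).
  nra.
Qed.

Lemma summable_of_poly_op_converges (a c : nat -> C) :
  op_norm_converges (fun n => poly_op a c n) -> ex_series (coeff_series a c).
Proof.
  intros [Lim HS]. destruct unit0_l2 as [He0 Hnorm0].
  destruct (HS 1 Rlt_0_1) as [N HN].
  assert (Herr : forall n, (N <= n)%nat -> forall L,
             fsum (fun j => Cmod (Cminus (poly_op a c n unit0 j) (Lim unit0 j)) ^ 2) L <= 1).
  { intros n Hn L. destruct (HN n Hn unit0 He0) as [Hin Hle].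
    rewrite Hnorm0, Rmult_1_r in Hle.
    eapply Rle_trans; [exact (l2_partial_le _ L Hin)|].
    pose proof (sqrt_pos (Series (fun j => Cmod (vsub (poly_op a c n unit0) (Lim unit0) j) ^ 2))).
    unfold l2norm in *. nra. }
  set (B := 3 * (2 + fsum (coeff_series a c) N)).
  assert (Hbound : forall M, (N <= M)%nat -> fsum (coeff_series a c) M <= B).
  { intros M HM. rewrite <- (Nat.min_id M), <- poly_op_unit0_energy.
    eapply Rle_trans.
    { apply fsum_le. intros j _.
      apply (Cmod_sq_split3 _ (Lim unit0 j) (poly_op a c N unit0 j)). }
    rewrite fsum_scal, !fsum_plus, poly_op_unit0_energy. unfold B.
    pose proof (Herr M HM (S M)). pose proof (Herr N (le_n N) (S M)).
    assert (fsum (coeff_series a c) (Nat.min N M) <= fsum (coeff_series a c) N).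
    { apply fsum_mono; [intros; apply Rmult_le_pos; apply pow2_ge_0|lia]. }
    lra. }
  apply (series_of_bounded_partial _ B).
  - intros k. apply Rmult_le_pos; apply pow2_ge_0.
  - intros M. destruct (Nat.le_gt_cases N M) as [HM|HM]; [apply Hbound, HM|].
    apply Rle_trans with (fsum (coeff_series a c) N); [|apply Hbound; lia].
    apply fsum_mono; [intros; apply Rmult_le_pos; apply pow2_ge_0|lia].
Qed.

Theorem mainTheorem10 (a c : nat -> C)
  (ha_nz : forall n : nat, a n <> RtoC 0)
  (ha_dec : forall n : nat, Cmod (a (S n)) <= Cmod (a n))
  (ha_l2 : ex_series (fun n => (Cmod (a n)) ^ 2)) :
  op_norm_converges (fun n => poly_op a c n)
  <->
  ex_series (fun k => (Cmod (c (S k))) ^ 2 * (Cmod (wprod a (S k))) ^ 2).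
Proof.
  split.
  - apply summable_of_poly_op_converges.
  - apply poly_op_converges_of_summable; [apply ha_nz|exact ha_dec|exact ha_l2].
Qed.
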